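(* Let $\mathcal{X}=\{x_k\}_{k=1}^m$ be a frame for $\mathbb{C}^n$. Then the following are equivalent: (1) $\mathcal{X}$ is injective; (2) the vectors $\{\tilde{x}_k\}_{k=1}^m$ span $\mathbb{R}^{n^2}$.
   Context: A family $\{x_k\}$ of vectors in a Hilbert space is called injective if whenever a self-adjoint operator $T$ satisfies $\langle Tx_k,x_k\rangle=0$ for all $k$, then $T=0$. For $x=(x_1,\dots,x_n)\in\mathbb{C}^n$ define $\tilde{x}\in\mathbb{R}^{n^2}$ by $\tilde{x}=(|x_1|^2,\mathrm{Re}(\bar{x}_1x_2),\mathrm{Im}(\bar{x}_1x_2),\dots,\mathrm{Re}(\bar{x}_1x_n),\mathrm{Im}(\bar{x}_1x_n);\ |x_2|^2,\mathrm{Re}(\bar{x}_2x_3),\mathrm{Im}(\bar{x}_2x_3),\dots,\mathrm{Re}(\bar{x}_2x_n),\mathrm{Im}(\bar{x}_2x_n);\ \dots;\ |x_{n-1}|^2,\mathrm{Re}(\bar{x}_{n-1}x_n),\mathrm{Im}(\bar{x}_{n-1}x_n);\ |x_n|^2)$. *)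

From HB Require Import structures.
From mathcomp Require Import all_boot all_order all_algebra.
From mathcomp Require Import complex.
Set Implicit Arguments. Unset Strict Implicit. Unset Printing Implicit Defensive.
Import Order.TTheory GRing.Theory Num.Theory.
Local Open Scope ring_scope.

Definition cabs2 (R : rcfType) (z : R[i]) : R := complex.Re z ^+ 2 + complex.Im z ^+ 2.

Definition cinner (R : rcfType) (n : nat) (u v : 'cV[R[i]]_n) : R[i] :=
  \sum_(i < n) u i 0 * conjc (v i 0).

Definition cnorm2 (R : rcfType) (n : nat) (u : 'cV[R[i]]_n) : R :=
  \sum_(i < n) cabs2 (u i 0).

Definition is_frame (R : rcfType) (n m : nat) (X : 'I_m -> 'cV[R[i]]_n) : Prop :=
  exists A B : R, 0 < A /\ 0 < B /\
    forall x : 'cV[R[i]]_n,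
      A * cnorm2 x <= \sum_(k < m) cabs2 (cinner x (X k)) <= B * cnorm2 x.

Definition self_adjoint (R : rcfType) (n : nat) (T : 'M[R[i]]_n) : Prop :=
  forall i j, T j i = conjc (T i j).

Definition injective_family (R : rcfType) (n m : nat)
    (X : 'I_m -> 'cV[R[i]]_n) : Prop :=
  forall T : 'M[R[i]]_n, self_adjoint T ->
    (forall k, cinner (T *m X k) (X k) = 0) -> T = 0.

(* the sequence of coordinates of x~ in the order of the paper:
   |x_1|^2, Re(conj x_1 x_2), Im(conj x_1 x_2), ..., Re(conj x_1 x_n), Im(..);
   |x_2|^2, ... ; ... ; |x_n|^2   (0-indexed here) *)
Definition tilde_seq (R : rcfType) (n : nat) (x : 'cV[R[i]]_n) : seq R :=
  let c := fun i : 'I_n => x i 0 in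
  flatten [seq cabs2 (c i) ::
             flatten [seq [:: complex.Re (conjc (c i) * c j);
                              complex.Im (conjc (c i) * c j)]
                     | j : 'I_n <- filter (fun j : 'I_n => (i < j)%N) (enum 'I_n)]
          | i : 'I_n <- enum 'I_n].
(* (this sequence has length n + 2 * (n(n-1)/2) = n^2) *)

Definition tilde (R : rcfType) (n : nat) (x : 'cV[R[i]]_n) : 'rV[R]_(n * n) :=
  \row_(p < n * n) nth 0 (tilde_seq x) p.

(* the matrix whose k-th row is x~_k; its rows span R^(n^2) iff it is row_full *)
Definition tilde_mx (R : rcfType) (n m : nat) (X : 'I_m -> 'cV[R[i]]_n)
  : 'M[R]_(m, n * n) :=
  \matrix_(k < m) tilde (X k).

From HB Require Import structures.
From mathcomp Require Import all_boot all_order all_algebra.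
From mathcomp Require Import complex.
From mathcomp Require Import zify ring lra.
Import Order.TTheory GRing.Theory Num.Theory.
Set Implicit Arguments. Unset Strict Implicit. Unset Printing Implicit Defensive.
Local Open Scope ring_scope.

Lemma flatten_map_uniq (S T : eqType) (f : S -> seq T) (key : T -> S) (s : seq S) :
  uniq s -> {in s, forall x, uniq (f x)} ->
  {in s, forall x, {in f x, forall y, key y = x}} ->
  uniq (flatten (map f s)).
Proof.
elim: s => //= x s IH /andP[xNs s_uniq] f_uniq f_key.
rewrite cat_uniq f_uniq ?mem_head //= IH //; last 2 first.
- by move=> z zs; apply: f_uniq; rewrite in_cons zs orbT.
- by move=> z zs; apply: f_key; rewrite in_cons zs orbT.
rewrite andbT; apply/hasPn => y /flatten_mapP[z zs yz]; apply/negP => yx.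
have keyz : key y = z by apply: f_key; rewrite ?in_cons ?zs ?orbT.
by move: xNs; rewrite -(f_key x (mem_head _ _) y yx) keyz zs.
Qed.

Lemma row_full_ker (F : fieldType) m n (A : 'M[F]_(m, n)) :
  row_full A <-> (forall v : 'cV_n, A *m v = 0 -> v = 0).
Proof.
split=> [A_full v Av0|ker0]; first by apply: (row_full_inj A_full); rewrite Av0 mulmx0.
rewrite /row_full -mxrank_tr; apply: inj_row_free => u uA0.
have Au0 : A *m u^T = 0 by rewrite -[A]trmxK -trmx_mul uA0 trmx0.
by rewrite -[u]trmxK (ker0 _ Au0) trmx0.
Qed.

Lemma sum_odd_ord (n : nat) : (\sum_(i < n) i.*2.+1 = n * n)%N.
Proof. by elim: n => [|n IH]; rewrite ?big_ord0 // big_ord_recr /= IH; lia. Qed.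

Lemma count_ord_gt (n : nat) (i : 'I_n) :
  count (fun j : 'I_n => (i < j)%N) (enum 'I_n) = (n - i.+1)%N.
Proof.
rewrite -(count_map val (fun k => (i < k)%N)) val_enum_ord.
have := count_predC (fun k => (k <= i)%N) (iota 0 n).
rewrite -size_filter (filter_iota_leq 0 (ltn_ord i)) size_iota size_iota.
rewrite (eq_count (a2 := fun k => (i < k)%N)) => [|k /=]; first lia.
by rewrite -ltnNge.
Qed.

Inductive tilde_kind := Diag | ReOff | ImOff.

Definition tilde_kind_eqb (k k' : tilde_kind) : bool :=
  match k, k' with
  | Diag, Diag | ReOff, ReOff | ImOff, ImOff => true
  | _, _ => false
  end.

Lemma tilde_kind_eqP : Equality.axiom tilde_kind_eqb.
Proof. by case; case; constructor. Qed.

HB.instance Definition _ := hasDecEq.Build tilde_kind tilde_kind_eqP.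

Section TildeIndices.
Variable n : nat.

(* (a, b, k) names the coordinate |x_a|^2, Re (conj(x_a) x_b) or Im (conj(x_a) x_b)
   of x~; tilde_indices lists the names in the order of tilde_seq. *)
Definition tilde_index := ('I_n * 'I_n * tilde_kind)%type.

Definition tilde_block (i : 'I_n) : seq tilde_index :=
  (i, i, Diag) :: [seq (i, j, k) | j <- [seq j : 'I_n <- enum 'I_n | (i < j)%N],
                                   k <- [:: ReOff; ImOff]].

Definition tilde_indices : seq tilde_index := flatten (map tilde_block (enum 'I_n)).

Definition valid_index (l : tilde_index) : bool :=
  let: (a, b, k) := l in if k is Diag then a == b else (a < b)%N.

Lemma valid_index_le (a b : 'I_n) k : valid_index (a, b, k) -> (a <= b)%N.
Proof. by case: k => /= [/eqP ->|/ltnW|/ltnW]. Qed.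

Lemma valid_index_diag (a b : 'I_n) k : valid_index (a, b, k) -> (a == b) = (k == Diag).
Proof. by case: k => /= [->|ab|ab] //; rewrite -val_eqE ltn_eqF. Qed.

Lemma mem_tilde_indices l : (l \in tilde_indices) = valid_index l.
Proof.
case: l => [[a b] k]; apply/flatten_mapP/idP => [[i _]|].
  rewrite in_cons => /orP[/eqP[-> -> ->]|]; first by rewrite /= eqxx.
  case/allpairsP => -[j k'] /=; rewrite mem_filter !inE.
  by move=> -[/andP[ij _] /orP[]/eqP-> [-> -> ->]].
case: k => /= [/eqP <-|ab|ab]; exists a; rewrite -?enumT ?mem_enum ?mem_head //.
all: rewrite in_cons (allpairs_f (fun j k => (a, j, k))) ?orbT //.
all: by rewrite ?mem_filter ?ab -?enumT ?mem_enum // !inE ?eqxx ?orbT.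
Qed.

Lemma tilde_indices_uniq : uniq tilde_indices.
Proof.
apply: (flatten_map_uniq (key := fun l => l.1.1)) => [|i _|i _ l].
- exact: enum_uniq.
- rewrite cons_uniq; apply/andP; split.
    by apply/negP; case/allpairsP => -[j k] [_]; rewrite !inE => /orP[]/eqP-> [].
  apply: allpairs_uniq => [||[j k] [j' k'] _ _ [-> ->]] //.
  exact/filter_uniq/enum_uniq.
- by rewrite in_cons => /orP[/eqP-> //|/allpairsP[[j k] [_ _ ->]]].
Qed.

Lemma size_tilde_block i : size (tilde_block i) = (n - i.+1).*2.+1.
Proof.
by rewrite /tilde_block -cat1s size_cat size_allpairs size_filter count_ord_gt muln2.
Qed.

Lemma size_tilde_indices : size tilde_indices = (n * n)%N.
Proof.
rewrite size_flatten /shape -map_comp sumnE big_map big_enum.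
rewrite (reindex_inj rev_ord_inj) -[RHS]sum_odd_ord; apply: eq_bigr => i _.
by rewrite [LHS]size_tilde_block /=; have := ltn_ord i; lia.
Qed.

Definition tilde_indices_tuple : (n * n).-tuple tilde_index :=
  Tuple (introT eqP size_tilde_indices).

End TildeIndices.

Section SelfAdjointBasis.
Variables (R : rcfType) (n : nat).
Local Notation C := R[i].
Local Open Scope complex_scope.

Lemma cinnerDl (u v x : 'cV[C]_n) : cinner (u + v) x = cinner u x + cinner v x.
Proof. by rewrite /cinner -big_split; apply: eq_bigr => i _; rewrite mxE mulrDl. Qed.

Lemma cinnerZl z (u x : 'cV[C]_n) : cinner (z *: u) x = z * cinner u x.
Proof. by rewrite /cinner mulr_sumr; apply: eq_bigr => i _; rewrite mxE mulrA. Qed.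

Lemma cinner_suml k (F : 'I_k -> 'cV[C]_n) x :
  cinner (\sum_(p < k) F p) x = \sum_(p < k) cinner (F p) x.
Proof. by rewrite /cinner exchange_big; apply: eq_bigr => i _; rewrite summxE mulr_suml. Qed.

Lemma cinner_delta_mx (a b : 'I_n) (x : 'cV[C]_n) :
  cinner (delta_mx a b *m x) x = x b 0 * (x a 0)^*.
Proof.
rewrite /cinner (bigD1 a) //= big1 ?addr0 => [|i /negbTE ia]; rewrite !mxE.
  rewrite (bigD1 b) //= big1 ?addr0 => [|j /negbTE jb];
  by rewrite !mxE ?eqxx ?jb ?andbF ?mul1r ?mul0r.
by rewrite big1 ?mul0r // => j _; rewrite mxE ia mul0r.
Qed.

(* <(w E_ab + conj w E_ba) x, x> = 2 Re (w conj(x_a) x_b); for w = 1/2, 1/2, -i/2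
   this is |x_a|^2 (when a = b), Re (conj(x_a) x_b) and Im (conj(x_a) x_b).
   Off the diagonal, coord_weight k is 1 / basis_weight k. *)
Definition basis_weight (k : tilde_kind) : C :=
  if k is ImOff then 0 +i* (- 2^-1) else 2^-1 +i* 0.

Definition sa_basis (l : tilde_index n) : 'M[C]_n :=
  let: (a, b, k) := l in
  basis_weight k *: delta_mx a b + (basis_weight k)^* *: delta_mx b a.

Definition tilde_entry (l : tilde_index n) (x : 'cV[C]_n) : R :=
  let: (a, b, k) := l in
  match k with
  | Diag => cabs2 (x a 0)
  | ReOff => complex.Re ((x a 0)^* * x b 0)
  | ImOff => complex.Im ((x a 0)^* * x b 0)
  end.

Definition coord_weight (k : tilde_kind) : C :=
  match k with Diag => 1 | ReOff => 2 | ImOff => 0 +i* 2 end.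

Definition sa_coord (l : tilde_index n) (T : 'M[C]_n) : R :=
  let: (a, b, k) := l in complex.Re (coord_weight k * T a b).

Lemma sa_basis_self_adjoint l : self_adjoint (sa_basis l).
Proof.
case: l => [[a b] k] i j; rewrite !mxE rmorphD !rmorphM /= conjcK !conjc_nat addrC.
by rewrite [(j == a) && _]andbC [(j == b) && _]andbC.
Qed.

Lemma cinner_sa_basis l x :
  valid_index l -> cinner (sa_basis l *m x) x = (tilde_entry l x)%:C.
Proof.
case: l => [[a b] k]; rewrite /= mulmxDl -!scalemxAl cinnerDl !cinnerZl !cinner_delta_mx.
case: k => [/eqP <-|_|_]; case: (x a 0) => p q; case: (x b 0) => r s;
  by rewrite /cabs2 /=; simpc; congr Complex; field.
Qed.

Lemma sa_coordB l : zmod_morphism (sa_coord l).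
Proof.
case: l => [[a b] k] A B; rewrite /= !mxE mulrBr.
by case: (_ * A a b) => p q; case: (_ * B a b).
Qed.

HB.instance Definition _ l :=
  GRing.isZmodMorphism.Build 'M[C]_n R (sa_coord l) (sa_coordB l).

Lemma sa_coordZ l r T : sa_coord l (r%:C *: T) = r * sa_coord l T.
Proof.
case: l => [[a b] k]; rewrite /= !mxE mulrCA.
by case: (_ * T a b) => p q; simpc.
Qed.

Lemma sa_basis_upper a' b' k' (a b : 'I_n) :
  valid_index (a', b', k') -> (a <= b)%N ->
  sa_basis (a', b', k') a b =
  if (a == a') && (b == b') then (if k' is Diag then 1 else basis_weight k') else 0.
Proof.
move=> vl ab; have a'b' := valid_index_le vl; rewrite /= !mxE.
case: ifP => [/andP[/eqP ea /eqP eb]|ne].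
  subst a' b'; rewrite [b == a]eq_sym andbb (valid_index_diag vl).
  by case: k' {vl a'b'} => /=; rewrite ?mulr1 ?mulr0 ?addr0 //; simpc; congr Complex; field.
have -> : (a == b') && (b == a') = false.
  apply/negbTE/andP => -[/eqP eab' /eqP eba']; subst a b.
  move: ne; have -> : a' = b' by apply/val_inj/anti_leq; rewrite a'b' ab.
  by rewrite eqxx.
by rewrite !mulr0 addr0.
Qed.

Lemma sa_coord_basis l l' :
  valid_index l -> valid_index l' -> sa_coord l (sa_basis l') = (l == l')%:R.
Proof.
case: l l' => [[a b] k] [[a' b'] k'] vl vl'.
rewrite /sa_coord sa_basis_upper ?(valid_index_le vl) // !xpair_eqE.
case: ifP => [/andP[/eqP ea /eqP eb]|_]; last by case: k {vl}; rewrite /= ?mul0r; simpc.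
subst a' b'; have := valid_index_diag vl; rewrite (valid_index_diag vl').
by case: k k' {vl vl'} => [] [] //= _; simpc; field.
Qed.

Lemma self_adjoint_eq0 T :
  self_adjoint T -> (forall l, valid_index l -> sa_coord l T = 0) -> T = 0.
Proof.
move=> saT coord0; apply/matrixP => i j; rewrite mxE.
wlog ij : i j / (i <= j)%N.
  move=> upper0; case: (leqP i j) => [/upper0 //|/ltnW/upper0 Tji].
  by rewrite saT Tji conjc0.
move: ij; rewrite leq_eqVlt => /orP[/eqP/val_inj <-|ij].
  have /= := coord0 (i, i, Diag) (eqxx _); have := saT i i.
  by case: (T i i) => p q [] q0; simpc => /= p0; congr Complex; lra.
have /= := coord0 (i, j, ReOff) ij; have /= := coord0 (i, j, ImOff) ij.
by case: (T i j) => p q; simpc => /= h2 h1; congr Complex; nra.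
Qed.

End SelfAdjointBasis.

Section TildeCoordinates.
Variables (R : rcfType) (n : nat).
Local Notation C := R[i].
Local Open Scope complex_scope.

Definition tilde_label (p : 'I_(n * n)) : tilde_index n := tnth (tilde_indices_tuple n) p.

Lemma valid_tilde_label p : valid_index (tilde_label p).
Proof. by rewrite -mem_tilde_indices mem_tnth. Qed.

Lemma tilde_label_inj : injective tilde_label.
Proof. exact/tuple_uniqP/tilde_indices_uniq. Qed.

Lemma tilde_seqE (x : 'cV[C]_n) : tilde_seq x = [seq tilde_entry l x | l <- tilde_indices n].
Proof.
rewrite map_flatten -map_comp; congr flatten; apply: eq_map => i /=.
by rewrite map_flatten -map_comp.
Qed.

Lemma tilde_label_entry (x : 'cV[C]_n) p : tilde x 0 p = tilde_entry (tilde_label p) x.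
Proof.
rewrite mxE tilde_seqE (nth_map (tilde_label p)) ?size_tilde_indices //.
by rewrite [in RHS]/tilde_label (tnth_nth (tilde_label p)).
Qed.

Definition sa_of_coords (v : 'cV[R]_(n * n)) : 'M[C]_n :=
  \sum_(p < n * n) (v p 0)%:C *: sa_basis R (tilde_label p).

Definition sa_coords (T : 'M[C]_n) : 'cV[R]_(n * n) := \col_p sa_coord (tilde_label p) T.

Lemma sa_coordsB : zmod_morphism sa_coords.
Proof. by move=> A B; apply/matrixP => p j; rewrite !mxE raddfB. Qed.

HB.instance Definition _ :=
  GRing.isZmodMorphism.Build 'M[C]_n 'cV[R]_(n * n) sa_coords sa_coordsB.

Lemma sa_of_coords0 : sa_of_coords 0 = 0.
Proof. by rewrite /sa_of_coords big1 // => p _; rewrite mxE scale0r. Qed.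

Lemma sa_of_coords_self_adjoint v : self_adjoint (sa_of_coords v).
Proof.
move=> i j; rewrite !summxE rmorph_sum; apply: eq_bigr => p _.
by rewrite !mxE rmorphM /= oppr0 sa_basis_self_adjoint.
Qed.

Lemma cinner_sa_of_coords v (x : 'cV[C]_n) :
  cinner (sa_of_coords v *m x) x = ((tilde x *m v) 0 0)%:C.
Proof.
rewrite mulmx_suml cinner_suml mxE rmorph_sum; apply: eq_bigr => p _.
rewrite -scalemxAl cinnerZl cinner_sa_basis ?valid_tilde_label //.
by rewrite tilde_label_entry rmorphM mulrC.
Qed.

Lemma sa_of_coordsK : cancel sa_of_coords sa_coords.
Proof.
move=> v; apply/matrixP => p j; rewrite (ord1 j) mxE raddf_sum.
under eq_bigr do rewrite /= sa_coordZ sa_coord_basis ?valid_tilde_label //.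
rewrite (bigD1 p) //= eqxx mulr1 big1 ?addr0 // => q qp.
by rewrite (inj_eq tilde_label_inj) eq_sym (negbTE qp) mulr0.
Qed.

Lemma sa_coordsK T : self_adjoint T -> sa_of_coords (sa_coords T) = T.
Proof.
move=> saT; apply/esym/subr0_eq/self_adjoint_eq0 => [i j|l vl].
  by rewrite !mxE rmorphB /= saT sa_of_coords_self_adjoint.
have [p ->] : exists p, l = tilde_label p by apply/tnthP; rewrite mem_tilde_indices.
transitivity (sa_coords (T - sa_of_coords (sa_coords T)) p 0); first by rewrite mxE.
by rewrite raddfB /= sa_of_coordsK subrr mxE.
Qed.

End TildeCoordinates.

Lemma tilde_mx_mulE (R : rcfType) n m (X : 'I_m -> 'cV[R[i]]_n) (v : 'cV[R]_(n * n)) k :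
  (tilde_mx X *m v) k 0 = (tilde (X k) *m v) 0 0.
Proof. by rewrite !mxE; apply: eq_bigr => p _; rewrite mxE. Qed.

Theorem mainTheorem2 (R : rcfType) (n m : nat) (X : 'I_m -> 'cV[R[i]]_n) :
  is_frame X ->
  (injective_family X <-> row_full (tilde_mx X)).
Proof.
move=> _; rewrite row_full_ker; split=> [Xinj v Xv0 | ker0 T saT XT0].
  have Tv0 : sa_of_coords v = 0.
    apply: Xinj => [|k]; first exact: sa_of_coords_self_adjoint.
    by rewrite cinner_sa_of_coords -tilde_mx_mulE Xv0 mxE.
  by rewrite -[v]sa_of_coordsK Tv0 raddf0.
have cT0 : sa_coords T = 0.
  apply/ker0/matrixP => k j; rewrite ord1 tilde_mx_mulE [RHS]mxE.
  by apply: (@complexI R); rewrite -cinner_sa_of_coords sa_coordsK // XT0.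
by rewrite -(sa_coordsK saT) cT0 sa_of_coords0.
Qed.
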